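(* Let $\rho>0$ and $n\ge1$ an integer. For the ancestral chain started at $(0,0,n)$ with $s(0)=0$, $\mathbb{P}_{0,0,n,0}[s(\tau)=0]=\frac{(n-1)!}{(\rho+1)_{n-1}}$, where $\tau=\inf\{s\ge0:(a(s),b(s),c(s))\in\{(0,0,1),(1,1,0)\}\}$ and $(x)_k=x(x+1)\cdots(x+k-1)$.
   Context: The ancestral chain $(a(t),b(t),c(t))$ with parameter $\rho$ is the continuous-time Markov chain on $\mathbb{Z}_+^3\setminus\{\mathbf 0\}$ which from $(a,b,c)$ jumps to $(a+1,b+1,c-1)$ at rate $c\rho/2$ (a recombination event), to $(a-1,b-1,c+1)$ at rate $ab$, to $(a-1,b,c)$ at rate $ac+a(a-1)/2$, to $(a,b-1,c)$ at rate $bc+b(b-1)/2$, and to $(a,b,c-1)$ at rate $c(c-1)/2$. $s(t)$ is the number of recombination jumps in $(0,t)$. *)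

From Stdlib Require Import Reals List Arith.
Import ListNotations.
Open Scope R_scope.

Definition state := (nat * nat * nat)%type.

Definition is_target (x : state) : bool :=
  let '(a, b, c) := x in
  ((Nat.eqb a 0 && Nat.eqb b 0 && Nat.eqb c 1)
   || (Nat.eqb a 1 && Nat.eqb b 1 && Nat.eqb c 0))%bool.

(** The possible jumps out of (a,b,c): (target, rate, is_recombination).
    Jumps that are impossible (e.g. a = 0 for a decrease of a) have rate 0,
    so the truncated nat subtraction in the target is irrelevant. *)
Definition jumps (rho : R) (x : state) : list (state * R * bool) :=
  let '(a, b, c) := x in
  [ ((a + 1, b + 1, c - 1)%nat, INR c * rho / 2, true);
    ((a - 1, b - 1, c + 1)%nat, INR a * INR b, false);
    ((a - 1, b, c)%nat, INR a * INR c + INR a * (INR a - 1) / 2, false);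
    ((a, b - 1, c)%nat, INR b * INR c + INR b * (INR b - 1) / 2, false);
    ((a, b, c - 1)%nat, INR c * (INR c - 1) / 2, false) ].

Definition qtot (rho : R) (x : state) : R :=
  fold_right (fun j acc => snd (fst j) + acc) 0 (jumps rho x).

(** [hit_norec rho k x] = probability, for the chain started at x with s = 0,
    that tau equals the k-th jump time and no recombination jump occurs in
    the open interval (0, tau), i.e. s(tau) = 0 with tau the k-th jump.
    Jump from x to y with rate r has (embedded jump chain) probability
    r / q(x).  The jump landing at time tau itself is not counted by s(tau)
    (s counts jumps in (0,t)). *)
Fixpoint hit_norec (rho : R) (k : nat) (x : state) : R :=
  if is_target x then (match k with O => 1 | S _ => 0 end)
  else match k with
       | O => 0
       | S k' =>
           fold_right
             (fun j acc =>
                let '(y, r, rec) := j in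
                acc + (if (negb rec || is_target y)%bool
                       then r / qtot rho x * hit_norec rho k' y else 0))
             0 (jumps rho x)
       end.

(** P_{x,0}[ s(tau) = 0 ] = sum over k of hit_norec rho k x
    (the events "tau is the k-th jump" are disjoint; on {tau = infinity}
    the event s(tau)=0 is not realized). *)
Definition prob_no_rec_before_tau (rho : R) (x : state) (p : R) : Prop :=
  infinite_sum (fun k => hit_norec rho k x) p.

Fixpoint poch (x : R) (k : nat) : R :=
  match k with
  | O => 1
  | S k' => poch x k' * (x + INR k')
  end.

(** From (0,0,c) with c >= 2 the only jumps of positive rate are the recombination
    to (1,1,c-1), which is not a target, and the coalescence to (0,0,c-1), taken with
    probability (c(c-1)/2) / (c(c-1)/2 + c rho/2) = (c-1)/(rho+c-1).  So s(tau) = 0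
    exactly when the chain coalesces straight down from (0,0,n) to (0,0,1), which
    makes tau the (n-1)-th jump and has probability
    prod_(c=2..n) (c-1)/(rho+c-1) = (n-1)!/(rho+1)_(n-1). *)

From Stdlib Require Import Reals Arith Factorial Lra Lia.
Open Scope R_scope.

Lemma poch_pos (x : R) (m : nat) : 0 < x -> 0 < poch x m.
Proof.
  intros Hx; induction m as [|m IH]; simpl; [lra|].
  apply Rmult_lt_0_compat; [exact IH|]. pose proof (pos_INR m); lra.
Qed.

Lemma sum_f_R0_indicator (f : nat -> R) (i N : nat) (v : R) :
  (forall k, f k = if Nat.eqb k i then v else 0) ->
  sum_f_R0 f N = if Nat.leb i N then v else 0.
Proof.
  intros Hf. induction N as [|N IH]; cbn [sum_f_R0]; rewrite Hf.
  - destruct (Nat.eqb_spec 0 i), (Nat.leb_spec i 0); try reflexivity; lia.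
  - rewrite IH.
    destruct (Nat.leb_spec i N), (Nat.eqb_spec (S N) i), (Nat.leb_spec i (S N));
      try lia; lra.
Qed.

Lemma infinite_sum_indicator (f : nat -> R) (i : nat) (v : R) :
  (forall k, f k = if Nat.eqb k i then v else 0) -> infinite_sum f v.
Proof.
  intros Hf eps Heps. exists i. intros N HN. unfold R_dist.
  rewrite (sum_f_R0_indicator f i N v Hf).
  destruct (Nat.leb_spec i N); [|lia].
  rewrite Rminus_diag, Rabs_R0. exact Heps.
Qed.

Lemma hit_norec_target_bottom (rho : R) (k : nat) :
  hit_norec rho k (0%nat, 0%nat, 1%nat) = if Nat.eqb k 0 then 1 else 0.
Proof. now destruct k. Qed.

Lemma hit_norec_coalescence_step (rho : R) (m k : nat) : 0 < rho ->
  hit_norec rho (S k) (0%nat, 0%nat, S (S m)) =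
  INR (S m) / (rho + INR (S m)) * hit_norec rho k (0%nat, 0%nat, S m).
Proof.
  intros Hr. cbn -[INR qtot Rdiv hit_norec].
  unfold qtot. cbn -[INR Rdiv].
  replace (S (S m) - 1)%nat with (S m) by lia.
  rewrite !S_INR. simpl (INR 0). pose proof (pos_INR m).
  field. nra.
Qed.

Lemma hit_norec_coalescent (rho : R) (m k : nat) : 0 < rho ->
  hit_norec rho k (0%nat, 0%nat, S m) =
  if Nat.eqb k m then INR (fact m) / poch (rho + 1) m else 0.
Proof.
  intros Hr. revert k. induction m as [|m IH]; intros k.
  - rewrite hit_norec_target_bottom. destruct k; simpl; [field | reflexivity].
  - destruct k as [|k]; [reflexivity|].
    rewrite hit_norec_coalescence_step, IH by exact Hr.
    simpl Nat.eqb. destruct (Nat.eqb k m); [|ring].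
    pose proof (pos_INR m). pose proof (poch_pos (rho + 1) m ltac:(lra)).
    rewrite fact_simpl, mult_INR; cbn [poch]; rewrite !S_INR.
    field; lra.
Qed.

Theorem theorem5p5 (rho : R) (n : nat) :
  0 < rho -> (1 <= n)%nat ->
  prob_no_rec_before_tau rho (0%nat, 0%nat, n)
    (INR (fact (n - 1)) / poch (rho + 1) (n - 1)).
Proof.
  intros Hr Hn. destruct n as [|m]; [lia|].
  replace (S m - 1)%nat with m by lia.
  apply (infinite_sum_indicator _ m).
  intros k. exact (hit_norec_coalescent rho m k Hr).
Qed.
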